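(* Let $\mathbb{N}_0[[x]]$ be the semidomain of formal power series with coefficients in $\mathbb{N}_0$ (a subsemiring of $\mathbb{Z}[[x]]$). Then $\mathbb{N}_0[[x]]$ is not atomic. (In particular, atomicity does not ascend from the UFS $\mathbb{N}_0$ to its semidomain of formal power series.)
   Context: For a semidomain $S$ (a subset of an integral domain containing $0,1$ and closed under $+$ and $\cdot$), $S^*=S\setminus\{0\}$ is a multiplicative monoid; an atom is a nonunit $a\in S^*$ such that $a=bc$ with $b,c\in S^*$ forces $b$ or $c$ to be a unit; $S$ is atomic if every nonunit of $S^*$ is a finite product of atoms. $S$ is a UFS if every nonunit of $S^*$ factors into atoms uniquely up to order and unit factors. *)

From mathcomp Require Import all_boot.
Set Implicit Arguments. Unset Strict Implicit. Unset Printing Implicit Defensive.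

Section Factorization.
Variables (T : Type) (mul : T -> T -> T) (one zero : T).

Definition is_unit (u : T) : Prop := exists v, mul u v = one.

Definition is_atom (a : T) : Prop :=
  a <> zero /\ ~ is_unit a /\
  forall b c, b <> zero -> c <> zero -> a = mul b c -> is_unit b \/ is_unit c.

Definition is_atomic : Prop :=
  forall a, a <> zero -> ~ is_unit a ->
    exists s : seq T, s <> [::] /\ (forall i, i < size s -> forall d, is_atom (nth d s i)) /\
                      a = foldr mul one s.
End Factorization.

(* N_0[[x]] : formal power series with coefficients in nat, as coefficient
   sequences nat -> nat (coefficient of x^n is f n). *)
Definition nps := nat -> nat.
Definition nps_zero : nps := fun _ => 0.
Definition nps_one : nps := fun n => if n == 0 then 1 else 0.
Definition nps_mul (f g : nps) : nps :=
  fun n => \sum_(i < n.+1) f i * g (n - i).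

(* The geometric series geom 1 = 1 + x + x^2 + ... is a nonzero nonunit of
   N_0[[x]] that is not a product of atoms.  If geom k = g * h with g an atom
   and g_k <> 0, then g and h have coefficients in {0, 1} and their supports A
   and B tile kN: every multiple of k is uniquely a + b with a in A, b in B.
   For the least positive m in B, B consists of multiples of m and A is
   m-periodic on kN, so g = (1 + x^k + ... + x^(m-k)) * v with v supported on
   mN.  As g is an atom, v = 1, and cancelling gives h = geom m.  Hence
   removing a suitable atom from a factorization of geom k leaves a
   factorization of some geom m with one factor fewer, which is impossible
   for the empty product 1. *)

From mathcomp Require Import all_boot all_algebra zify.
From Stdlib Require Import FunctionalExtensionality Classical.
Set Implicit Arguments. Unset Strict Implicit. Unset Printing Implicit Defensive.
Import GRing.Theory.

(* The coefficients of f * g below N only involve those of f and g below N,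
   so commutativity and associativity transfer from {poly nat}. *)
Section TruncatedPolynomials.
Local Open Scope ring_scope.

Definition nps_poly (N : nat) (f : nps) : {poly nat} := \poly_(i < N) f i.

Lemma nps_mul_poly N f g n : (n < N)%N ->
  nps_mul f g n = (nps_poly N f * nps_poly N g)`_n.
Proof.
move=> ltnN; rewrite coefM /nps_mul; apply: eq_bigr => i _.
rewrite !coef_poly (leq_ltn_trans (leq_ord i) ltnN).
by rewrite (leq_ltn_trans (leq_subr i n) ltnN).
Qed.

Lemma coefM_le (p p' q q' : {poly nat}) n :
  (forall j, (j <= n)%N -> p`_j = p'`_j) -> (forall j, (j <= n)%N -> q`_j = q'`_j) ->
  (p * q)`_n = (p' * q')`_n.
Proof.
move=> eq_p eq_q; rewrite !coefM; apply: eq_bigr => i _.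
by rewrite eq_p ?eq_q ?leq_subr // -ltnS.
Qed.

Lemma nps_mulC f g : nps_mul f g = nps_mul g f.
Proof.
by apply: functional_extensionality => n; rewrite !(nps_mul_poly _ _ (ltnSn n)) mulrC.
Qed.

Lemma nps_mulA f g h : nps_mul f (nps_mul g h) = nps_mul (nps_mul f g) h.
Proof.
apply: functional_extensionality => n; rewrite !(nps_mul_poly _ _ (ltnSn n)).
set P := nps_poly n.+1.
have P_mul u v j : (j <= n)%N -> (P (nps_mul u v))`_j = (P u * P v)`_j.
  move=> le_jn; rewrite coef_poly ltnS le_jn.
  exact/nps_mul_poly/(leq_ltn_trans le_jn (ltnSn n)).
rewrite (@coefM_le _ (P f) _ (P g * P h)) //; last by move=> j /P_mul.
rewrite [RHS](@coefM_le _ (P f * P g) _ (P h)) //; last by move=> j /P_mul.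
by rewrite mulrA.
Qed.

End TruncatedPolynomials.

Notation nps_unit := (is_unit nps_mul nps_one).
Notation nps_atom := (is_atom nps_mul nps_one nps_zero).

Lemma nps_mul_coef0 f g : nps_mul f g 0 = f 0 * g 0.
Proof. by rewrite /nps_mul big_ord_recl big_ord0 addn0. Qed.

Lemma nps_mul1n f : nps_mul nps_one f = f.
Proof.
apply: functional_extensionality => n.
by rewrite /nps_mul big_ord_recl big1 ?addn0 ?subn0 ?mul1n.
Qed.

Lemma nps_muln1 f : nps_mul f nps_one = f.
Proof. by rewrite nps_mulC nps_mul1n. Qed.

Lemma leq_coef_mull f g n : f n * g 0 <= nps_mul f g n.
Proof. by rewrite /nps_mul (bigD1 ord_max) //= subnn leq_addr. Qed.

Lemma leq_coef_mulr f g n : f 0 * g n <= nps_mul f g n.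
Proof. by rewrite /nps_mul (bigD1 ord0) //= subn0 leq_addr. Qed.

Lemma leq_coef_mul2 f g n i j : i <= n -> j <= n -> i != j ->
  f i * g (n - i) + f j * g (n - j) <= nps_mul f g n.
Proof.
move=> le_in le_jn neq_ij.
have lt_in : i < n.+1 by []. have lt_jn : j < n.+1 by [].
rewrite /nps_mul (bigD1 (Ordinal lt_in)) //= (bigD1 (Ordinal lt_jn)) /=.
  by rewrite addnA leq_addr.
by apply: contra neq_ij => /eqP[->].
Qed.

Lemma nps_mul_gt0P f g n :
  0 < nps_mul f g n -> exists2 i, i <= n & 0 < f i * g (n - i).
Proof.
rewrite lt0n /nps_mul sum_nat_eq0 => /forallPn[i /=]; rewrite -lt0n => pos_i.
by exists i; first by rewrite -ltnS.
Qed.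

Lemma nps_mulI u : u 0 = 1 -> injective (nps_mul u).
Proof.
move=> u0 h h' eq_uh; apply: functional_extensionality => n.
elim/ltn_ind: n => n IH; have := congr1 (fun f => f n) eq_uh.
rewrite /nps_mul !big_ord_recl /= !subn0 u0 !mul1n.
have -> : \sum_(i < n) u (bump 0 i) * h (n - bump 0 i) =
          \sum_(i < n) u (bump 0 i) * h' (n - bump 0 i).
  by apply: eq_bigr => i _; rewrite IH // /bump /=; have := ltn_ord i; lia.
by move/addIn.
Qed.

Lemma nps_unit_coef u n : 0 < n -> nps_unit u -> u n = 0.
Proof.
move=> n_gt0 [w uw].
have /eqP : u 0 * w 0 = 1 by rewrite -nps_mul_coef0 uw.
rewrite muln_eq1 => /andP[_ /eqP w0].
have := leq_coef_mull u w n.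
by rewrite uw w0 muln1 /nps_one (negbTE (lt0n_neq0 n_gt0)) leqn0 => /eqP.
Qed.

Lemma not_nps_atom_mul u v i j : 0 < i -> u i != 0 -> 0 < j -> v j != 0 ->
  ~ nps_atom (nps_mul u v).
Proof.
move=> i_gt0 ui j_gt0 vj [_ [_ irr]].
have nz f l : f l != 0 -> f <> nps_zero by move=> + f0; rewrite f0.
case: (irr u v (nz _ _ ui) (nz _ _ vj) erefl) => [Uu | Uv].
  by rewrite (nps_unit_coef i_gt0 Uu) in ui.
by rewrite (nps_unit_coef j_gt0 Uv) in vj.
Qed.

Definition geom (k : nat) : nps := fun n => k %| n.

Definition nps_trunc (m : nat) (f : nps) : nps := fun i => if i < m then f i else 0.

Lemma nps_mul_trunc_geom k m v n : 0 < m -> k %| m ->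
  (forall j, ~~ (m %| j) -> v j = 0) ->
  nps_mul (nps_trunc m (geom k)) v n = (k %| n) * v (n - n %% m).
Proof.
move=> m_gt0 km v_supp.
have lt_r : n %% m < n.+1 by rewrite ltnS leq_mod.
rewrite /nps_mul (bigD1 (Ordinal lt_r)) //= big1 ?addn0.
  have k_mod : (k %| n %% m) = (k %| n).
    by rewrite [in RHS](divn_eq n m) dvdn_addr // dvdn_mull.
  by rewrite /nps_trunc ltn_pmod // /geom k_mod.
move=> [i lt_in] /= neq_ir; rewrite /nps_trunc.
case: ifP => [lt_im | _]; last by rewrite mul0n.
rewrite v_supp ?muln0 //; apply: contra neq_ir => /dvdnP[c n_eq].
apply/eqP/val_inj => /=; have le_in : i <= n by rewrite -ltnS.
by rewrite -(subnK le_in) n_eq modnMDl modn_small.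
Qed.

Lemma dvdn_sub_mod n m : m %| n - n %% m.
Proof. by rewrite {1}(divn_eq n m) addnK dvdn_mull. Qed.

Lemma geom_trunc_mul k m : 0 < m -> k %| m ->
  nps_mul (nps_trunc m (geom k)) (geom m) = geom k.
Proof.
move=> m_gt0 km; apply: functional_extensionality => n.
rewrite nps_mul_trunc_geom //; last by move=> j /negbTE; rewrite /geom => ->.
by rewrite /geom dvdn_sub_mod muln1.
Qed.

Lemma geom_not_atom k : 0 < k -> ~ nps_atom (geom k).
Proof.
move=> k_gt0; have k2_gt0 : 0 < 2 * k by rewrite muln_gt0.
rewrite -(@geom_trunc_mul k (2 * k)) ?dvdn_mull //.
apply: (@not_nps_atom_mul _ _ k (2 * k)) => //; rewrite /geom ?dvdnn //.
by rewrite /nps_trunc ltn_Pmull // dvdnn.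
Qed.

Section Tiling.
Variables (A B : pred nat) (k m : nat).
Hypothesis B_dvd : forall b, B b -> k %| b.
Hypothesis tile_ex : forall n, k %| n -> exists a b, [/\ A a, B b & a + b = n].
Hypothesis tile_uniq :
  forall a b a' b', A a -> B b -> A a' -> B b' -> a + b = a' + b' -> a = a'.
Hypotheses (m_gt0 : 0 < m) (Bm : B m) (m_min : forall b, 0 < b < m -> ~~ B b).

Lemma tile_uniqr a b a' b' : A a -> B b -> A a' -> B b' -> a + b = a' + b' -> b = b'.
Proof.
move=> Aa Bb Aa' Bb' eq_ab.
by move: (eq_ab); rewrite (tile_uniq Aa Bb Aa' Bb') // => /addnI.
Qed.

Lemma tile_dvd_km : k %| m.
Proof. exact: B_dvd. Qed.

Lemma tile_small n : n < m -> k %| n -> A n.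
Proof.
move=> lt_nm kn; have [a [b [Aa Bb ab]]] := tile_ex kn; subst n.
have [-> | b_gt0] := posnP b; first by rewrite addn0.
by have := @m_min b; rewrite b_gt0 (leq_ltn_trans (leq_addl a b) lt_nm) Bb => /(_ isT).
Qed.

Lemma tile_B0 : B 0.
Proof.
have [a [b [_ Bb /eqP]]] := tile_ex (dvdn0 k).
by rewrite addn_eq0 => /andP[_ /eqP <-].
Qed.

Lemma tile_A0 : A 0.
Proof. exact: tile_small. Qed.

(* Both parts are proved together by strong induction on n: writing n = p + r
   with p the largest multiple of m below n, the induction hypothesis shifts a
   decomposition of p by r into one of n (tile_split_floor), and uniqueness of
   decompositions does the rest. *)
Definition tile_inv n := (B n -> m %| n) /\ (k %| n -> A n = A (n - n %% m)).

Section Step.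
Variable n : nat.
Hypothesis IH : forall n', n' < n -> tile_inv n'.
Let r := n %% m.
Let p := n - r.

Lemma tile_dvd_kr : k %| n -> k %| r.
Proof. by move=> kn; rewrite /r /dvdn modn_dvdm ?tile_dvd_km. Qed.

Lemma floor_add_mod : n = p + r.
Proof. by rewrite subnK ?leq_mod. Qed.

Lemma tile_split_floor : 0 < r -> k %| n ->
  A p \/ exists a b, [/\ A (a + r), B b, 0 < b & a + r + b = n].
Proof.
move=> r_gt0 kn; have n_eq := floor_add_mod.
have kp : k %| p by rewrite dvdn_sub ?tile_dvd_kr.
have [a [b [Aa Bb ab]]] := tile_ex kp.
have mb : m %| b by case: (@IH b) => [| /(_ Bb) //]; lia.
have ma : m %| a by rewrite -(dvdn_addl _ mb) ab dvdn_sub_mod.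
have [b0 | b_gt0] := posnP b; [by left; rewrite -ab b0 addn0 | right].
exists a, b; split=> //; last by rewrite addnAC ab n_eq.
have ka : k %| a + r := dvdn_add (dvdn_trans tile_dvd_km ma) (tile_dvd_kr kn).
case: (@IH (a + r)) => [| _ ->] //.
  by rewrite n_eq -ab addnAC -[X in X < _]addn0 ltn_add2l.
have /dvdnP[c a_eq] := ma.
by rewrite a_eq modnMDl modn_small ?addnK -?a_eq ?ltn_pmod.
Qed.

Lemma tile_step_B : B n -> m %| n.
Proof.
move=> Bn; have [r0 | r_gt0] := posnP r; first exact/eqP.
have n_eq := floor_add_mod; have r_lt_m : r < m by exact: ltn_pmod.
case: (tile_split_floor r_gt0 (B_dvd Bn)) => [Ap | [a [b [Aar Bb b_gt0 sum_n]]]].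
- have Amr : A (m - r).
    by apply: tile_small; [lia | rewrite dvdn_sub ?tile_dvd_km ?tile_dvd_kr ?B_dvd].
  have p_eq : m - r = p by apply: tile_uniq Amr Bn Ap Bm _; lia.
  by have := dvdn_sub_mod n m; rewrite -/r -/p -p_eq => /dvdn_leq; lia.
- by have := tile_uniq Aar Bb tile_A0 Bn; lia.
Qed.

Lemma tile_step_A : k %| n -> A n = A p.
Proof.
move=> kn; have [r0 | r_gt0] := posnP r; first by rewrite /p r0 subn0.
have n_eq := floor_add_mod.
apply/idP/idP => [An | Ap].
  case: (tile_split_floor r_gt0 kn) => [// | [a [b [Aar Bb b_gt0 sum_n]]]].
  by have := tile_uniqr Aar Bb An tile_B0; lia.
have [a [b [Aa Bb ab]]] := tile_ex kn.
have lt_bn : b < n.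
  rewrite ltn_neqAle -{2}ab leq_addl andbT; apply/eqP => b_n.
  by move: Bb r_gt0; rewrite b_n /r => /tile_step_B /eqP ->.
have mb : m %| b by case: (@IH b) => // /(_ Bb).
have [b0 | b_gt0] := posnP b; first by rewrite -ab b0 addn0.
have ka : k %| a by rewrite -(dvdn_addl a (B_dvd Bb)) ab.
have a_mod : a %% m = r.
  by have /dvdnP[c b_eq] := mb; rewrite /r -ab b_eq addnC modnMDl.
have le_ra : r <= a by rewrite -a_mod leq_mod.
have Apb : A (p - b).
  case: (@IH a) => [| _ /(_ ka)]; first by rewrite -ab -[X in X < _]addn0 ltn_add2l.
  by rewrite a_mod (_ : a - r = p - b) => [<- | ]; last by clear -ab n_eq le_ra; lia.
have le_bp : b <= p by clear -ab n_eq le_ra; lia.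
have := tile_uniqr Apb Bb Ap tile_B0; rewrite subnK // addn0 => /(_ erefl) b0.
by rewrite b0 in b_gt0.
Qed.

End Step.

Lemma tile_invP n : tile_inv n.
Proof. by elim/ltn_ind: n => n IH; split; [exact: tile_step_B | exact: tile_step_A]. Qed.

Lemma tile_periodic_A n : k %| n -> A n = A (n - n %% m).
Proof. exact: (tile_invP n).2. Qed.

End Tiling.

Lemma geom_le_dvd k f n : f n <= geom k n -> f n != 0 -> k %| n.
Proof. by rewrite /geom; case: (k %| n) => //; rewrite leqn0 => ->. Qed.

Lemma geom_le_bool k f n : f n <= geom k n -> f n = (f n != 0).
Proof.
move=> le_f; have : f n <= 1 by apply: leq_trans le_f _; rewrite /geom leq_b1.
by case: (f n) => [|[|]].
Qed.

Section GeomDivisor.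
Variables (g h : nps) (k : nat).
Hypotheses (k_gt0 : 0 < k) (gh : nps_mul g h = geom k).

Lemma geom_divisor_coef0 : g 0 = 1 /\ h 0 = 1.
Proof.
have := nps_mul_coef0 g h; rewrite gh /geom dvdn0 => /esym/eqP.
by rewrite muln_eq1 => /andP[/eqP -> /eqP ->].
Qed.

Lemma geom_divisor_le n : g n <= geom k n /\ h n <= geom k n.
Proof.
have [g0 h0] := geom_divisor_coef0.
split; rewrite -gh; first by rewrite -[g n]muln1 -h0 leq_coef_mull.
by rewrite -[h n]mul1n -g0 leq_coef_mulr.
Qed.

Lemma geom_divisor_ex n : k %| n ->
  exists a b, [/\ g a != 0, h b != 0 & a + b = n].
Proof.
move=> kn; have : 0 < nps_mul g h n by rewrite gh /geom kn.
case/nps_mul_gt0P => a le_an; rewrite muln_gt0 !lt0n => /andP[ga hb].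
by exists a, (n - a); rewrite subnKC.
Qed.

Lemma geom_divisor_uniq a b a' b' : g a != 0 -> h b != 0 -> g a' != 0 -> h b' != 0 ->
  a + b = a' + b' -> a = a'.
Proof.
move=> ga hb ga' hb' eq_ab; apply/eqP/negP => /negP neq_a.
have le_a' : a' <= a + b by rewrite eq_ab leq_addr.
have := leq_coef_mul2 g h (leq_addr b a) le_a' neq_a.
rewrite addKn eq_ab addKn -eq_ab gh.
have [/geom_le_bool -> _] := geom_divisor_le a.
have [_ /geom_le_bool ->] := geom_divisor_le b.
have [/geom_le_bool -> _] := geom_divisor_le a'.
have [_ /geom_le_bool ->] := geom_divisor_le b'.
by rewrite ga hb ga' hb' /geom; case: (_ %| _).
Qed.

Section LeastExponent.
Variable m : nat.
Hypotheses (m_gt0 : 0 < m) (hm : h m != 0) (m_min : forall b, 0 < b < m -> h b = 0).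

Lemma geom_divisor_factor :
  g = nps_mul (nps_trunc m (geom k)) (fun n => (m %| n) * g n).
Proof.
have B_dvd b : h b != 0 -> k %| b := geom_le_dvd (geom_divisor_le b).2.
have min_B b : 0 < b < m -> ~~ (h b != 0) by move/m_min ->.
have km : k %| m := B_dvd m hm.
apply: functional_extensionality => n; rewrite nps_mul_trunc_geom //; last first.
  by move=> j /negbTE ->.
rewrite dvdn_sub_mod mul1n.
have [kn | nkn] := boolP (k %| n); last first.
  apply/eqP; rewrite mul0n eqn0Ngt lt0n; apply: contra nkn.
  exact: geom_le_dvd (geom_divisor_le n).1.
have [/geom_le_bool -> _] := geom_divisor_le n.
have [/geom_le_bool -> _] := geom_divisor_le (n - n %% m).
rewrite mul1n; congr nat_of_bool.
exact: (tile_periodic_A B_dvd geom_divisor_ex geom_divisor_uniq m_gt0 hm min_B kn).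
Qed.

End LeastExponent.

Lemma geom_divisor_atom : g k != 0 -> nps_atom g -> exists2 m, 0 < m & h = geom m.
Proof.
move=> gk atom_g; have [g0 h0] := geom_divisor_coef0.
case: (classic (exists m, (0 < m) && (h m != 0))) => [ex_m | no_m]; last first.
  have h1 : h = nps_one.
    apply: functional_extensionality => -[|n] //=.
    by apply/eqP/negPn/negP => hn; case: no_m; exists n.+1.
  by case: (geom_not_atom k_gt0); rewrite -gh h1 nps_muln1.
case: (ex_minnP ex_m) => m /andP[m_gt0 hm] m_le.
have m_min b : 0 < b < m -> h b = 0.
  by case/andP => b_gt0; apply: contraTeq => hb; rewrite -leqNgt m_le // b_gt0.
have km : k %| m := geom_le_dvd (geom_divisor_le m).2 hm.
have k_lt_m : k < m.
  rewrite ltn_neqAle dvdn_leq // andbT; apply/eqP => k_eq_m.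
  move: hm; rewrite -k_eq_m => hk.
  have := @geom_divisor_uniq k 0 0 k gk; rewrite h0 g0 addn0 add0n.
  by move=> /(_ isT isT hk erefl) k0; move: k_gt0; rewrite k0.
have g_fac := geom_divisor_factor m_gt0 hm m_min.
have v1 : (fun n => (m %| n) * g n) = nps_one.
  apply: functional_extensionality => -[|n] /=; first by rewrite dvdn0 g0.
  apply/eqP/negPn/negP => vn; move: atom_g; rewrite g_fac.
  by apply: (@not_nps_atom_mul _ _ k n.+1) => //; rewrite /nps_trunc k_lt_m /geom dvdnn.
have g_trunc : g = nps_trunc m (geom k) by rewrite g_fac v1 nps_muln1.
exists m => //; apply: (@nps_mulI (nps_trunc m (geom k))).
  by rewrite /nps_trunc m_gt0 /geom dvdn0.
by rewrite geom_trunc_mul // -g_trunc.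
Qed.

End GeomDivisor.

Definition nps_prod (s : seq nps) : nps := foldr nps_mul nps_one s.

Lemma nps_prod_cat_cons s1 x s2 :
  nps_prod (s1 ++ x :: s2) = nps_mul x (nps_prod (s1 ++ s2)).
Proof. by elim: s1 => //= y s1 ->; rewrite nps_mulA (nps_mulC y) -nps_mulA. Qed.

Lemma nps_prod_coef_eq0 s n :
  (forall x, List.In x s -> forall i, 0 < i <= n -> x i = 0) ->
  forall i, 0 < i <= n -> nps_prod s i = 0.
Proof.
elim: s => [_ [|i] // | y s IH vanish i /andP[i_gt0 le_in]] /=.
have vanish_s := IH (fun x xs => vanish x (or_intror xs)).
rewrite /nps_mul big1 // => -[j lt_ji] _ /=.
have [-> | j_gt0] := posnP j; first by rewrite subn0 vanish_s ?i_gt0 ?muln0.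
have le_jn : j <= n by rewrite (leq_trans _ le_in) // -ltnS.
by rewrite (vanish y (or_introl erefl) j) ?mul0n // j_gt0.
Qed.

Lemma geom_nps_prod_factor s k : 0 < k -> nps_prod s = geom k ->
  exists2 x, List.In x s & x k != 0.
Proof.
move=> k_gt0 prod_s; apply: NNPP => no_x.
suff : nps_prod s k = 0 by rewrite prod_s /geom dvdnn.
apply: (@nps_prod_coef_eq0 s k); last by rewrite k_gt0 leqnn.
move=> x xs i /andP[i_gt0 le_ik].
have [-> | neq_ik] := eqVneq i k; first by apply/eqP/negPn/negP => xk; apply: no_x; exists x.
have [s1 [s2 s_eq]] := List.in_split _ _ xs.
move: prod_s; rewrite s_eq nps_prod_cat_cons => /geom_divisor_le/(_ i)[+ _].
rewrite /geom (negbTE (_ : ~~ (k %| i))) ?leqn0 => [/eqP // |].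
by apply: contra neq_ik => /(dvdn_leq i_gt0) le_ki; rewrite eqn_leq le_ik.
Qed.

Lemma nps_prod_atoms_neq_geom s k : 0 < k -> (forall x, List.In x s -> nps_atom x) ->
  nps_prod s <> geom k.
Proof.
have [N] := ubnP (size s); elim: N s k => // N IH s k lt_sN k_gt0 atoms prod_s.
have [x xs xk] := geom_nps_prod_factor k_gt0 prod_s.
have [s1 [s2 s_eq]] := List.in_split _ _ xs.
rewrite s_eq nps_prod_cat_cons in prod_s.
have [m m_gt0 prod_rest] := geom_divisor_atom k_gt0 prod_s xk (atoms x xs).
apply: (IH (s1 ++ s2) m) => //; first by move: lt_sN; rewrite s_eq !size_cat addnS.
move=> y /List.in_app_iff y_in; apply: atoms; rewrite s_eq List.in_app_iff /=.
by case: y_in; [left | right; right].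
Qed.

Lemma seq_In_nth T (x : T) s : List.In x s -> exists2 i, i < size s & nth x s i = x.
Proof.
elim: s => //= y s IH [-> | /IH[i lt_is nth_i]]; first by exists 0.
by exists i.+1.
Qed.

Theorem mainTheorem5 : ~ is_atomic nps_mul nps_one nps_zero.
Proof.
move=> atomic.
have geom1_neq0 : geom 1 <> nps_zero by move/(congr1 (fun f => f 0)).
have geom1_nunit : ~ nps_unit (geom 1).
  by move/(nps_unit_coef (ltn0Sn 0)); rewrite /geom dvd1n.
have [s [_ [atoms prod_s]]] := atomic _ geom1_neq0 geom1_nunit.
apply: (@nps_prod_atoms_neq_geom s 1 isT _ (esym prod_s)) => x xs.
have [i lt_is nth_i] := seq_In_nth xs.
by rewrite -nth_i; apply: atoms.
Qed.
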